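(* A topological space $(X,\tau)$ is a D-space if and only if for every continuous map $f:(X,\tau)\to(\mathcal P(X),\tau_{\mathcal S(X)})$ with $x\in f(x)$ for all $x\in X$, there exist a continuous neighborhood refinement map $f_*$ of $f$ and a closed discrete set $D\subseteq X$ such that the map $g:(X,\tau)\to(\mathcal P(D),\tau_{\mathcal S(D)})$, $g(x)=f_*(x)\cap D$, is continuous and satisfies $g^{-1}(\{\emptyset\})=\emptyset$.
   Context: For a set $A$ and $a\in A$, $\mathcal U_A(a)=\{B\subseteq A: a\in B\}$; the principal ultrafilter topology $\tau_{\mathcal S(A)}$ on $\mathcal P(A)$ is generated by the subbase $\{\mathcal U_A(a): a\in A\}$. A continuous neighborhood refinement map of $f$ is a continuous map $f_*:(X,\tau)\to(\mathcal P(X),\tau_{\mathcal S(X)})$ with $x\in f_*(x)\subseteq f(x)$ for all $x$. An open neighborhood assignment is $N:X\to\tau$ with $x\in N(x)$; $X$ is a D-space if every open neighborhood assignment $N$ admits a closed discrete $D\subseteq X$ with $\bigcup_{d\in D}N(d)=X$. *)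

From mathcomp Require Import all_boot.
From mathcomp Require Import boolp classical_sets cardinality topology.
Set Implicit Arguments. Unset Strict Implicit. Unset Printing Implicit Defensive.
Local Open Scope classical_set_scope.

(* For A : set T, P(A) is represented as the sets B : set T with B `<=` A.
   U_A(a) = [set B | B `<=` A /\ B a]. *)
Definition PU_sub (T : Type) (A : set T) (a : T) : set (set T) :=
  [set B | B `<=` A /\ B a].

(* Open sets of the topology on P(A) generated by the subbase {U_A(a) : a in A}:
   unions of finite intersections of subbase elements (the empty intersection
   being P(A) itself). *)
Definition PU_open (T : Type) (A : set T) (W : set (set T)) : Prop :=
  W `<=` [set B | B `<=` A] /\
  forall B, W B -> exists F : set T,
    [/\ finite_set F, F `<=` A, B `<=` A /\ (forall a, F a -> B a) &
        (forall C, C `<=` A -> (forall a, F a -> C a) -> W C)].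

Definition PU_continuous (X : topologicalType) (A : set X) (g : X -> set X) : Prop :=
  (forall x, g x `<=` A) /\ (forall W, PU_open A W -> open (g @^-1` W)).

Definition closed_discrete (X : topologicalType) (D : set X) : Prop :=
  closed D /\ forall x, D x -> exists U : set X, [/\ open U, U x & U `&` D = [set x]].

Definition open_nbhd_assignment (X : topologicalType) (N : X -> set X) : Prop :=
  forall x, open (N x) /\ N x x.

Definition D_space (X : topologicalType) : Prop :=
  forall N : X -> set X, open_nbhd_assignment N ->
    exists D : set X, closed_discrete D /\ \bigcup_(d in D) N d = setT.

Definition cont_nbhd_refinement (X : topologicalType) (f fs : X -> set X) : Prop :=
  PU_continuous setT fs /\ forall x, fs x x /\ fs x `<=` f x.

(* A map f : X -> P(A) is continuous for the principal ultrafilter topology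
   exactly when every slice [set x | f x a], a in A, is open.  For
   f x = [set y | N y x] the slices are the neighborhoods N a, and f x meets D
   exactly when x is covered by some N d with d in D.  So a D-space supplies D
   for the slice assignment of f (with f as its own refinement), and
   conversely D for the map built from N, refined or not, is a D-kernel. *)
From mathcomp Require Import all_boot.
From mathcomp Require Import boolp classical_sets cardinality topology.
From mathcomp Require Import finmap.
Local Open Scope classical_set_scope.

Section PrincipalUltrafilterContinuity.
Variables (X : topologicalType) (A : set X).

Lemma PU_open_sub (a : X) : A a -> PU_open A (PU_sub A a).
Proof.
move=> Aa; split=> [B [] //|B [AB Ba]].
exists [set a]; split=> //.
- by move=> _ ->.
- by split=> // _ ->.
- by move=> C AC Ca; split=> //; apply: Ca.
Qed.

Lemma PU_continuousP (g : X -> set X) :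
  PU_continuous A g <->
  (forall x, g x `<=` A) /\ (forall a, A a -> open [set x | g x a]).
Proof.
split=> -[gA gc]; split=> //.
  move=> a Aa; have -> : [set x | g x a] = g @^-1` PU_sub A a.
    by apply/seteqP; split=> x /= => [gxa|[]//]; split.
  exact/gc/PU_open_sub.
move=> W [_ WF]; rewrite openE => x /= Wgx.
have [F [/finite_fsetP[S ->] FA [_ Fgx] WC]] := WF _ Wgx.
have : nbhs x (\bigcap_(a in [set` S]) [set y | g y a]).
  apply: filter_bigI => a Sa; apply: open_nbhs_nbhs; split.
    by apply/gc/FA.
  exact: Fgx.
by apply: filterS => y Sgy; apply: WC.
Qed.

End PrincipalUltrafilterContinuity.

Lemma PU_continuous_setI (X : topologicalType) (f : X -> set X) (D : set X) :
  PU_continuous setT f -> PU_continuous D (fun x => f x `&` D).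
Proof.
move=> /PU_continuousP[_ fc]; apply/PU_continuousP; split=> [x y []//|a Da].
suff -> : [set x | (f x `&` D) a] = [set x | f x a] by exact: fc.
by apply/seteqP; split=> x /= => [[]//|fxa].
Qed.

Lemma bigcup_slices_setT (X : Type) (f : X -> set X) (D : set X) :
  \bigcup_(d in D) [set x | f x d] = setT <->
  (fun x => f x `&` D) @^-1` [set set0] = set0.
Proof.
split=> [cover|empty].
  apply/seteqP; split=> // x /= fxD0.
  have [d Dd fxd] : (\bigcup_(d in D) [set x | f x d]) x by rewrite cover.
  by have : (f x `&` D) d by []; rewrite fxD0.
apply/seteqP; split=> // x _; apply: contrapT => uncovered.
suff : ((fun x => f x `&` D) @^-1` [set set0]) x by rewrite empty.
by apply/seteqP; split=> // d [fxd Dd]; apply: uncovered; exists d.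
Qed.

Theorem mainTheorem19 (X : topologicalType) :
  D_space X <->
  (forall f : X -> set X, PU_continuous setT f -> (forall x, f x x) ->
     exists (fs : X -> set X) (D : set X),
       [/\ cont_nbhd_refinement f fs, closed_discrete D,
           PU_continuous D (fun x => fs x `&` D) &
           (fun x => fs x `&` D) @^-1` [set set0] = set0]).
Proof.
split=> [HD f fc fxx|H N HN].
  have [_ slice_open] := (PU_continuousP _ _ _).1 fc.
  have [D [Dcd cover]] := HD (fun a => [set x | f x a])
    (fun a => conj (slice_open a I) (fxx a)).
  exists f, D; split=> //; last exact/bigcup_slices_setT.
  - by split=> // x; split.
  - exact: PU_continuous_setI.
pose f x := [set y | N y x].
have fc : PU_continuous setT f.
  by apply/PU_continuousP; split=> // a _; exact: (HN a).1.
have [fs [D [[_ fsf] Dcd _ /bigcup_slices_setT cover]]] :=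
  H f fc (fun x => (HN x).2).
exists D; split=> //; apply/seteqP; split=> // x _.
have [d Dd fsxd] : (\bigcup_(d in D) [set x | fs x d]) x by rewrite cover.
by exists d => //; apply: (fsf x).2.
Qed.
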